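(* Let $F\colon\mathsf{Set}\to\mathsf{Set}$ be a functor and $\Lambda^F$ a set of evaluation functions $F\mathcal{V}\to\mathcal{V}$. Define, for $d_X\colon X\times X\to\mathcal{V}$ and $s,t\in FX$, \[\overline{F}(d_X)(s,t)=\bigwedge_{\mathit{ev}\in\Lambda^F}\ \bigwedge_{f\in\gamma_X(d_X)} d_\mathcal{V}(\mathit{ev}(Ff(s)),\mathit{ev}(Ff(t))).\] Then $\overline{F}$ (acting as $F$ on maps) is a functor on the category $\mathcal{V}\text{-}\mathsf{Graph}$, i.e. whenever $f\colon X\to Y$ satisfies $d_X\sqsubseteq d_Y\circ(f\times f)$ then $\overline{F}(d_X)\sqsubseteq\overline{F}(d_Y)\circ(Ff\times Ff)$. Moreover, restricted to $\mathcal{V}$-categories it is fibred: $\overline{F}(d_Y\circ(f\times f))=\overline{F}(d_Y)\circ(Ff\times Ff)$ for every function $f\colon X\to Y$ and every $\mathcal{V}$-category $d_Y$ on $Y$.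
   Context: $\mathcal{V}$ is a quantale: a complete lattice $(\mathcal{V},\sqsubseteq)$ with a commutative monoid structure $(\mathcal{V},\otimes,k)$ such that $\otimes$ preserves arbitrary joins in each argument; $d_\mathcal{V}(a,-)$ denotes the right adjoint of $a\otimes -$ (residuation). Write $\bigwedge$ for meets in the order $\sqsubseteq$. $\mathcal{V}\text{-}\mathsf{Graph}$ has objects pairs $(X,d_X)$ with $d_X\colon X\times X\to\mathcal{V}$ and morphisms non-expansive maps $f$ ($d_X\sqsubseteq d_Y\circ(f\times f)$). A $\mathcal{V}$-category is such a $d$ with $k\sqsubseteq d(x,x)$ and $d(x,y)\otimes d(y,z)\sqsubseteq d(x,z)$. $\gamma_X(d_X)=\{f\colon X\to\mathcal{V}\mid d_X(x_1,x_2)\sqsubseteq d_\mathcal{V}(f(x_1),f(x_2))\text{ for all }x_1,x_2\}$. $\overline{F}$ is the (coalgebraic) Kantorovich lifting of $F$ w.r.t. $\Lambda^F$. *)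

Set Implicit Arguments.
Unset Strict Implicit.

(** A (commutative) quantale: a complete lattice (given by its order and
    arbitrary joins) with a commutative monoid structure (tensor, k) whose
    tensor preserves arbitrary joins in each argument (by commutativity it
    suffices to ask it for one argument). *)
Record quantale := Quantale {
  qcar :> Type;
  qle : qcar -> qcar -> Prop;
  qle_refl : forall a, qle a a;
  qle_trans : forall a b c, qle a b -> qle b c -> qle a c;
  qle_antisym : forall a b, qle a b -> qle b a -> a = b;
  qsup : (qcar -> Prop) -> qcar;
  qsup_ub : forall (S : qcar -> Prop) a, S a -> qle a (qsup S);
  qsup_least : forall (S : qcar -> Prop) b,
      (forall a, S a -> qle a b) -> qle (qsup S) b;
  qtensor : qcar -> qcar -> qcar;
  qk : qcar;
  qtensorA : forall a b c, qtensor a (qtensor b c) = qtensor (qtensor a b) c;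
  qtensorC : forall a b, qtensor a b = qtensor b a;
  qtensor1 : forall a, qtensor qk a = a;
  qtensor_sup : forall a (S : qcar -> Prop),
      qtensor a (qsup S) = qsup (fun c => exists b, S b /\ c = qtensor a b)
}.

Section QuantaleOps.
Variable V : quantale.

Definition qinf (S : V -> Prop) : V :=
  @qsup V (fun c => forall a, S a -> qle c a).

(** Residuation d_V(a,-): right adjoint of a (x) -, i.e.
    d_V(a,b) = join of all c with a (x) c <= b. *)
Definition dV (a b : V) : V := @qsup V (fun c => qle (qtensor a c) b).

(** V-valued "distances" (objects of V-Graph are pairs (X, d_X)). *)
Definition vdist (X : Type) := X -> X -> V.

Definition dle (X : Type) (d1 d2 : vdist X) : Prop :=
  forall x y, qle (d1 x y) (d2 x y).

Definition dpull (X Y : Type) (f : X -> Y) (d : vdist Y) : vdist X :=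
  fun x y => d (f x) (f y).

Definition nonexpansive (X Y : Type) (dX : vdist X) (dY : vdist Y)
  (f : X -> Y) : Prop := dle dX (dpull f dY).

Definition Vcategory (X : Type) (d : vdist X) : Prop :=
  (forall x, qle (qk V) (d x x)) /\
  (forall x y z, qle (qtensor (d x y) (d y z)) (d x z)).

Definition gammaV (X : Type) (d : vdist X) (f : X -> V) : Prop :=
  forall x1 x2, qle (d x1 x2) (dV (f x1) (f x2)).

End QuantaleOps.

Record setFunctor := SetFunctor {
  fobj :> Type -> Type;
  fmap : forall X Y : Type, (X -> Y) -> fobj X -> fobj Y;
  fmap_id : forall X (s : fobj X), fmap (fun x : X => x) s = s;
  fmap_comp : forall X Y Z (f : X -> Y) (g : Y -> Z) (s : fobj X),
      fmap (fun x => g (f x)) s = fmap g (fmap f s)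
}.

Definition Kantorovich (V : quantale) (F : setFunctor)
  (Lambda : (F V -> V) -> Prop) (X : Type) (d : vdist V X) : vdist V (F X) :=
  fun s t => qinf (fun c => exists ev (f : X -> V),
      Lambda ev /\ gammaV d f /\
      c = dV (ev (@fmap F _ _ f s)) (ev (@fmap F _ _ f t))).

(** Functoriality holds because precomposing a non-expansive test function
    [g : Y -> V] with a non-expansive [f : X -> Y] yields a test function on
    [X], and [F] preserves composition.  For fibredness the converse is needed:
    every test function [h] for [dY o (f x f)] must factor as [g o f] with [g]
    a test function for [dY].  The left Kan extension
    [g y = \/_x h x (x) dY (f x) y] does this when [dY] is a V-category:
    reflexivity of [dY] gives [h <= g o f], non-expansiveness of [h] gives
    [g o f <= h], and transitivity of [dY] makes [g] non-expansive. *)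

From Stdlib Require Import FunctionalExtensionality.

Set Implicit Arguments.
Unset Strict Implicit.

Section QuantaleFacts.
Variable V : quantale.

Lemma qtensor_monor (c a b : V) : qle a b -> qle (qtensor c a) (qtensor c b).
Proof.
  intros Hab.
  assert (Eb : b = qsup (fun z => z = a \/ z = b)).
  { apply qle_antisym.
    - apply qsup_ub; auto.
    - apply qsup_least; intros z [-> | ->]; auto using qle_refl. }
  rewrite Eb, qtensor_sup.
  apply qsup_ub; exists a; auto.
Qed.

Lemma qtensor1r (a : V) : qtensor a (qk V) = a.
Proof. now rewrite qtensorC, qtensor1. Qed.

Lemma dV_adjoint (a b c : V) : qle (qtensor a c) b <-> qle c (dV a b).
Proof.
  split; intros H.
  - now apply qsup_ub.
  - apply qle_trans with (qtensor a (dV a b)); [now apply qtensor_monor|].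
    unfold dV; rewrite qtensor_sup.
    apply qsup_least; intros z [w [Hw ->]]; exact Hw.
Qed.

Lemma qinf_lb (S : V -> Prop) (a : V) : S a -> qle (qinf S) a.
Proof. intros Sa; apply qsup_least; auto. Qed.

Lemma qinf_glb (S : V -> Prop) (b : V) :
  (forall a, S a -> qle b a) -> qle b (qinf S).
Proof. intros Hb; now apply qsup_ub. Qed.

End QuantaleFacts.

Section KantorovichLifting.
Variables (V : quantale) (F : setFunctor) (Lambda : (F V -> V) -> Prop).

Lemma Kantorovich_le (X : Type) (d : vdist V X) (ev : F V -> V) (g : X -> V)
    (s t : F X) :
  Lambda ev -> gammaV d g ->
  qle (Kantorovich Lambda d s t) (dV (ev (@fmap F _ _ g s)) (ev (@fmap F _ _ g t))).
Proof. intros Hev Hg; apply qinf_lb; now exists ev, g. Qed.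

Lemma le_Kantorovich (X : Type) (d : vdist V X) (s t : F X) (c : V) :
  (forall ev g, Lambda ev -> gammaV d g ->
     qle c (dV (ev (@fmap F _ _ g s)) (ev (@fmap F _ _ g t)))) ->
  qle c (Kantorovich Lambda d s t).
Proof. intros Hc; apply qinf_glb; intros a [ev [g [Hev [Hg ->]]]]; auto. Qed.

Lemma gammaV_comp (X Y : Type) (dX : vdist V X) (dY : vdist V Y)
    (f : X -> Y) (g : Y -> V) :
  nonexpansive dX dY f -> gammaV dY g -> gammaV dX (fun x => g (f x)).
Proof. intros Hf Hg x1 x2; eapply qle_trans; [apply Hf | apply Hg]. Qed.

Lemma Kantorovich_nonexpansive (X Y : Type) (dX : vdist V X) (dY : vdist V Y)
    (f : X -> Y) :
  nonexpansive dX dY f ->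
  nonexpansive (Kantorovich Lambda dX) (Kantorovich Lambda dY) (@fmap F _ _ f).
Proof.
  intros Hf s t; apply le_Kantorovich; intros ev g Hev Hg.
  rewrite <- (fmap_comp f g s), <- (fmap_comp f g t).
  apply Kantorovich_le; [exact Hev|].
  exact (gammaV_comp Hf Hg).
Qed.

End KantorovichLifting.

Section KanExtension.
Variables (V : quantale) (X Y : Type) (f : X -> Y) (dY : vdist V Y) (h : X -> V).
Hypothesis dY_cat : Vcategory dY.
Hypothesis h_gamma : gammaV (dpull f dY) h.

Definition kan_ext (y : Y) : V :=
  qsup (fun c => exists x, c = qtensor (h x) (dY (f x) y)).

Lemma kan_ext_comp : (fun x => kan_ext (f x)) = h.
Proof.
  destruct dY_cat as [dY_refl _].
  apply functional_extensionality; intros x; apply qle_antisym.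
  - apply qsup_least; intros c [x' ->].
    apply (proj2 (dV_adjoint _ _ _)), h_gamma.
  - apply qle_trans with (qtensor (h x) (dY (f x) (f x))).
    + apply qle_trans with (qtensor (h x) (qk V)).
      * rewrite qtensor1r; apply qle_refl.
      * now apply qtensor_monor.
    + apply qsup_ub; now exists x.
Qed.

Lemma kan_ext_gamma : gammaV dY kan_ext.
Proof.
  destruct dY_cat as [_ dY_trans].
  intros y1 y2; apply (proj1 (dV_adjoint _ _ _)).
  rewrite qtensorC; unfold kan_ext at 1; rewrite qtensor_sup.
  apply qsup_least; intros c [c' [[x ->] ->]].
  rewrite qtensorC, <- qtensorA.
  apply qle_trans with (qtensor (h x) (dY (f x) y2)).
  - now apply qtensor_monor.
  - apply qsup_ub; now exists x.
Qed.

End KanExtension.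

Lemma Kantorovich_pull_le (V : quantale) (F : setFunctor)
    (Lambda : (F V -> V) -> Prop) (X Y : Type) (f : X -> Y) (dY : vdist V Y) :
  Vcategory dY ->
  dle (dpull (@fmap F _ _ f) (Kantorovich Lambda dY)) (Kantorovich Lambda (dpull f dY)).
Proof.
  intros dY_cat s t; apply le_Kantorovich; intros ev h Hev Hh.
  rewrite <- (kan_ext_comp dY_cat Hh), (fmap_comp f _ s), (fmap_comp f _ t).
  apply Kantorovich_le; [exact Hev|].
  exact (kan_ext_gamma f h dY_cat).
Qed.

Theorem mainTheorem10 (V : quantale) (F : setFunctor)
  (Lambda : (F V -> V) -> Prop) :
  (forall (X Y : Type) (dX : vdist V X) (dY : vdist V Y) (f : X -> Y),
      nonexpansive dX dY f ->
      nonexpansive (Kantorovich Lambda dX) (Kantorovich Lambda dY) (@fmap F _ _ f))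
  /\
  (forall (X Y : Type) (f : X -> Y) (dY : vdist V Y),
      Vcategory dY ->
      Kantorovich Lambda (dpull f dY) = dpull (@fmap F _ _ f) (Kantorovich Lambda dY)).
Proof.
  split; [exact (Kantorovich_nonexpansive Lambda)|].
  intros X Y f dY dY_cat.
  apply functional_extensionality; intros s.
  apply functional_extensionality; intros t.
  apply qle_antisym.
  - apply Kantorovich_nonexpansive; intros x y; apply qle_refl.
  - exact (Kantorovich_pull_le Lambda f dY_cat s t).
Qed.
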